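(* Let $(Y,D)$ be a pair of binary random variables with probability mass function $q_{ij}=\mathbb P(Y=i,D=j)$, $i,j\in\{0,1\}$. Then the following hold. (1) (Validity.) Suppose $(Y_0,Y_1)$ is a pair of $\{0,1\}$-valued random variables defined jointly with $(Y,D)$ such that $(Y,D,Y_0,Y_1)$ satisfies the binary Roy model, or such that there exist real random variables $(Y_0^\ast,Y_1^\ast)$ with $(Y,D,Y_0^\ast,Y_1^\ast)$ satisfying the alternative binary Roy model with $Y_d=1\{Y_d^\ast>0\}$. Then $$0\le \mathbb P(Y_0=1,Y_1=0)\le q_{10},\qquad 0\le \mathbb P(Y_0=0,Y_1=1)\le q_{11},\qquad \mathbb P(Y_0=0,Y_1=0)=q_{00}+q_{01}.$$ (2) (Sharpness.) Conversely, if $(p_{00},p_{01},p_{10})\in\mathbb R^3$ satisfies $0\le p_{10}\le q_{10}$, $0\le p_{01}\le q_{11}$ and $p_{00}=q_{00}+q_{01}$, then there exist, on some probability space, random variables $(\tilde Y,\tilde D,Y_0,Y_1)$ with $(\tilde Y,\tilde D)$ having the same distribution as $(Y,D)$, $Y_0,Y_1\in\{0,1\}$, such that $(\tilde Y,\tilde D,Y_0,Y_1)$ satisfies the binary Roy model (and hence also the alternative binary Roy model, with $Y_d^\ast=Y_d$) and $\mathbb P(Y_0=0,Y_1=0)=p_{00}$, $\mathbb P(Y_0=0,Y_1=1)=p_{01}$, $\mathbb P(Y_0=1,Y_1=0)=p_{10}$.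
   Context: All random variables are defined on a common probability space. The observed variables are an outcome $Y$ and a sector indicator $D\in\{0,1\}$; $(Y_0,Y_1)$ are unobserved potential outcomes. Binary Roy model: $Y_0,Y_1\in\{0,1\}$, $Y=Y_1D+Y_0(1-D)$, and almost surely $Y_1>Y_0\Rightarrow D=1$ and $Y_1<Y_0\Rightarrow D=0$ (nothing is assumed about $D$ when $Y_1=Y_0$). Alternative binary Roy model: $Y=Y_1D+Y_0(1-D)$ where $Y_d=1\{Y_d^\ast>0\}$ for $d=0,1$, for a pair of real random variables $(Y_0^\ast,Y_1^\ast)$ (possibly dependent), and almost surely $Y_1^\ast>Y_0^\ast\Rightarrow D=1$ and $Y_1^\ast<Y_0^\ast\Rightarrow D=0$. *)

From HB Require Import structures.
From mathcomp Require Import all_boot all_order all_algebra.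
From mathcomp Require Import all_classical all_reals all_analysis.
Set Implicit Arguments. Unset Strict Implicit. Unset Printing Implicit Defensive.
Import Order.TTheory GRing.Theory Num.Theory.
Local Open Scope classical_set_scope.
Local Open Scope ring_scope.

(* Binary variables are encoded as bool (false = 0, true = 1); the coercion
   nat_of_bool gives the numerical value used in Y = Y1 D + Y0 (1 - D). *)

Definition binary_roy {d} {T : measurableType d} {R : realType}
  (P : probability T R) (Y D Y0 Y1 : T -> bool) : Prop :=
  (forall t, (Y t : nat) = (Y1 t * D t + Y0 t * (1 - D t))%N) /\
  {ae P, forall t, ((Y0 t < Y1 t)%N -> D t = true) /\
                   ((Y1 t < Y0 t)%N -> D t = false)}.

Definition alt_binary_roy {d} {T : measurableType d} {R : realType}
  (P : probability T R) (Y D Y0 Y1 : T -> bool) (Y0s Y1s : T -> R) : Prop :=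
  (forall t, Y0 t = (0 < Y0s t)) /\ (forall t, Y1 t = (0 < Y1s t)) /\
  (forall t, (Y t : nat) = (Y1 t * D t + Y0 t * (1 - D t))%N) /\
  {ae P, forall t, (Y0s t < Y1s t -> D t = true) /\
                   (Y1s t < Y0s t -> D t = false)}.

Definition pmf2 {d} {T : measurableType d} {R : realType}
  (P : probability T R) (X Z : T -> bool) (i j : bool) : \bar R :=
  P [set t | X t = i /\ Z t = j].

(* (1) Pointwise Y = Y_D, and off a null set the selection rule excludes
   (Y0, Y1) = (1, 0) when D = 1 and (Y0, Y1) = (0, 1) when D = 0.  Hence, up
   to null sets, {Y0 = 1, Y1 = 0} lies in {Y = 1, D = 0}, {Y0 = 0, Y1 = 1} lies
   in {Y = 1, D = 1}, and {Y0 = Y1 = 0} is {Y = 0}.  The alternative model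
   reduces to the binary one because thresholding at 0 is monotone.
   (2) Conversely, put the mass q_ij of {Y = i, D = j} on values of
   (D, Y0, Y1) with Y_D = i, splitting q10 into p10 on (0, 1, 0) and
   q10 - p10 on (0, 1, 1), and q11 into p01 on (1, 0, 1) and q11 - p01 on
   (1, 1, 1).  The two values (0, 0, 1) and (1, 1, 0) that violate the
   selection rule get no mass. *)

From HB Require Import structures.
From mathcomp Require Import all_boot all_order all_algebra.
From mathcomp Require Import all_classical all_reals all_analysis.
From mathcomp Require Import lra.
Set Implicit Arguments. Unset Strict Implicit. Unset Printing Implicit Defensive.
Import Order.TTheory GRing.Theory Num.Theory.
Local Open Scope classical_set_scope.
Local Open Scope ring_scope.
Local Open Scope ereal_scope.

Lemma le_measure_ae d (T : measurableType d) (R : realType)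
    (mu : {measure set T -> \bar R}) (A B : set T) :
  measurable A -> measurable B -> {ae mu, forall t, A t -> B t} ->
  mu A <= mu B.
Proof.
move=> mA mB [N [mN muN0 AB_N]].
have sAB : A `<=` B `|` N.
  move=> t At; have [Bt|nBt] := pselect (B t); first by left.
  by right; apply: AB_N => /(_ At).
apply: (le_trans (le_measure _ _ _ sAB)); rewrite ?inE //; first exact: measurableU.
by apply: (le_trans (measureU2 mu mB mN)); rewrite [X in _ + X](_ : _ = 0) ?adde0.
Qed.

Section pmf2.
Context d (T : measurableType d) (R : realType) (P : probability T R).
Variables (X Z : T -> bool).
Hypotheses (mX : measurable_fun setT X) (mZ : measurable_fun setT Z).

Lemma measurable_eq_set (i : bool) : measurable [set t | X t = i].
Proof.
have -> : [set t | X t = i] = setT `&` X @^-1` [set i] by rewrite setTI.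
exact: mX.
Qed.

Lemma measurable_pmf2_set (i j : bool) : measurable [set t | X t = i /\ Z t = j].
Proof.
have -> : [set t | X t = i /\ Z t = j] =
  (setT `&` X @^-1` [set i]) `&` (setT `&` Z @^-1` [set j]).
  by apply/seteqP; split => t /=; [case=> -> ->| case=> [[_ ->] [_ ->]]].
by apply: measurableI; [exact: mX | exact: mZ].
Qed.

Lemma pmf2_marginal (i : bool) :
  P [set t | X t = i] = pmf2 P X Z i false + pmf2 P X Z i true.
Proof.
rewrite /pmf2 -measureU; try exact: measurable_pmf2_set; last first.
  by apply/seteqP; split => t //= [[_ ->] [_]].
congr (P _); apply/seteqP; split => t /=; last by case=> -[].
by move=> ->; case: (Z t); [right|left].
Qed.

Lemma pmf2_sum1 :
  pmf2 P X Z false false + pmf2 P X Z false true +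
  pmf2 P X Z true false + pmf2 P X Z true true = 1.
Proof.
rewrite -addeA -!pmf2_marginal -measureU; try exact: measurable_eq_set; last first.
  by apply/seteqP; split => t //= [->].
rewrite -(probability_setT P); congr (P _).
by apply/seteqP; split => t //= _; case: (X t); [right|left].
Qed.

Lemma pmf2_fin_num (i j : bool) : pmf2 P X Z i j \is a fin_num.
Proof.
rewrite ge0_fin_numE ?measure_ge0 //.
exact: le_lt_trans (probability_le1 P (measurable_pmf2_set i j)) (ltry 1%R).
Qed.

End pmf2.

Lemma measurable_fun_nat d (U : measurableType d) (f : nat -> U) :
  measurable_fun setT f.
Proof. by []. Qed.

Section discrete_prob.
Context (R : realType) (n : nat) (r : nat -> R).
Hypotheses (r_ge0 : forall k, (0 <= r k)%R) (r_sum1 : (\sum_(k < n) r k = 1)%R).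

Definition weighted_dirac : {measure set nat -> \bar R} :=
  msum (fun k => mscale (NngNum (r_ge0 k)) \d_k) n.

Lemma weighted_diracE A :
  weighted_dirac A = (\sum_(k < n) r k * ((k : nat) \in A)%:R)%:E.
Proof.
rewrite /weighted_dirac /msum -sumEFin; apply: eq_bigr => k _.
transitivity ((r k)%:E * \d_(k : nat) A); first by [].
by rewrite diracE EFinM.
Qed.

Definition discrete_prob : probability nat R :=
  mnormalize weighted_dirac \d_0%N.

Lemma discrete_probE A :
  discrete_prob A = (\sum_(k < n) r k * ((k : nat) \in A)%:R)%:E.
Proof.
have mass1 : weighted_dirac setT = 1.
  rewrite weighted_diracE; congr EFin; rewrite -[RHS]r_sum1.
  by apply: eq_bigr => k _; rewrite in_setT mulr1.
transitivity (mnormalize weighted_dirac \d_0%N A); first by [].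
by rewrite /mnormalize mass1 onee_eq0 /= invr1 mule1 weighted_diracE.
Qed.

Lemma discrete_prob_pmf2 (X Z : nat -> bool) i j :
  pmf2 discrete_prob X Z i j =
  (\sum_(k < n) r k * ((X k == i) && (Z k == j))%:R)%:E.
Proof.
rewrite /pmf2 discrete_probE; congr EFin; apply: eq_bigr => k _.
congr (_ * (nat_of_bool _)%:R)%R.
by apply/idP/andP; rewrite inE /= => -[]; [move=> -> -> | move=> /eqP -> /eqP ->].
Qed.

Lemma discrete_prob_ae (Q : nat -> Prop) :
  (forall k, (k < n)%N -> r k != 0%R -> Q k) -> {ae discrete_prob, forall k, Q k}.
Proof.
move=> rQ; exists (~` Q); split => //; rewrite discrete_probE; congr EFin.
apply: big1 => -[k kn] _ /=; have [->|/(rQ k kn) Qk] := eqVneq (r k) 0%R.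
  by rewrite mul0r.
by rewrite memNset ?mulr0.
Qed.

End discrete_prob.

Section binary_roy_validity.
Context d (T : measurableType d) (R : realType) (P : probability T R).
Variables (Y D Y0 Y1 : T -> bool).
Hypotheses (mY : measurable_fun setT Y) (mD : measurable_fun setT D).
Hypotheses (mY0 : measurable_fun setT Y0) (mY1 : measurable_fun setT Y1).
Hypothesis roy : binary_roy P Y D Y0 Y1.

Let outcome t : (Y t : nat) = (Y1 t * D t + Y0 t * (1 - D t))%N.
Proof. by case: roy. Qed.

Let selection :
  {ae P, forall t, ((Y0 t < Y1 t)%N -> D t = true) /\
                   ((Y1 t < Y0 t)%N -> D t = false)}.
Proof. by case: roy. Qed.

Lemma binary_roy_pmf2_10 : pmf2 P Y0 Y1 true false <= pmf2 P Y D true false.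
Proof.
apply: le_measure_ae; try exact: measurable_pmf2_set.
apply: filterS selection => t [_ sel] [Y0t Y1t] /=.
have Dt : D t = false by apply: sel; rewrite Y0t Y1t.
by move: (outcome t); rewrite Y0t Y1t Dt; case: (Y t).
Qed.

Lemma binary_roy_pmf2_01 : pmf2 P Y0 Y1 false true <= pmf2 P Y D true true.
Proof.
apply: le_measure_ae; try exact: measurable_pmf2_set.
apply: filterS selection => t [sel _] [Y0t Y1t] /=.
have Dt : D t = true by apply: sel; rewrite Y0t Y1t.
by move: (outcome t); rewrite Y0t Y1t Dt; case: (Y t).
Qed.

Lemma binary_roy_pmf2_00 :
  pmf2 P Y0 Y1 false false = pmf2 P Y D false false + pmf2 P Y D false true.
Proof.
rewrite -pmf2_marginal //; apply/le_anti/andP; split.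
  apply: le_measure_ae; [exact: measurable_pmf2_set | exact: measurable_eq_set |].
  apply: aeW => t [Y0t Y1t] /=.
  by move: (outcome t); rewrite Y0t Y1t; case: (Y t); case: (D t).
apply: le_measure_ae; [exact: measurable_eq_set | exact: measurable_pmf2_set |].
apply: filterS selection => t [sel01 sel10] /= Yt.
move: (outcome t) sel01 sel10; rewrite Yt.
by case: (Y0 t); case: (Y1 t); case: (D t) => //= _;
  [move=> _ /(_ erefl) | move=> /(_ erefl)].
Qed.

End binary_roy_validity.

Section roy_thresholds.
Context d (T : measurableType d) (R : realType) (P : probability T R).
Variables (Y D Y0 Y1 : T -> bool).

Lemma alt_binary_roy_binary_roy (Y0s Y1s : T -> R) :
  alt_binary_roy P Y D Y0 Y1 Y0s Y1s -> binary_roy P Y D Y0 Y1.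
Proof.
move=> [Y0E [Y1E [outcome selection]]]; split => //.
have threshold_lt (a b : R) : ((0 < a)%R < (0 < b)%R)%N -> (a < b)%R.
  case: (ltrP 0 a); case: (ltrP 0 b) => // b_gt0 a_le0 _.
  exact: le_lt_trans a_le0 b_gt0.
apply: filterS selection => t [sel01 sel10]; rewrite Y0E Y1E.
by split => /threshold_lt; [exact: sel01 | exact: sel10].
Qed.

Lemma binary_roy_alt_binary_roy :
  binary_roy P Y D Y0 Y1 ->
  alt_binary_roy P Y D Y0 Y1 (fun t => (Y0 t)%:R) (fun t => (Y1 t)%:R).
Proof.
move=> [outcome selection]; split; first by move=> t; rewrite ltr0n lt0b.
split; first by move=> t; rewrite ltr0n lt0b.
split => //; apply: filterS selection => t [sel01 sel10].
by rewrite !ltr_nat.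
Qed.

End roy_thresholds.

Section roy_construction.
Context (R : realType) (q : bool -> bool -> R) (p01 p10 : R).
Hypotheses (q_ge0 : forall i j, (0 <= q i j)%R)
  (q_sum1 : (q false false + q false true + q true false + q true true = 1)%R).
Hypotheses (p10_ge0 : (0 <= p10)%R) (p10_le : (p10 <= q true false)%R).
Hypotheses (p01_ge0 : (0 <= p01)%R) (p01_le : (p01 <= q true true)%R).

(* The atom k < 8 encodes (D, Y0, Y1) by the binary digits of k. *)
Definition roy_D (k : nat) : bool := odd k./2./2.
Definition roy_Y0 (k : nat) : bool := odd k./2.
Definition roy_Y1 (k : nat) : bool := odd k.
Definition roy_Y (k : nat) : bool := if roy_D k then roy_Y1 k else roy_Y0 k.

Definition roy_weight (k : nat) : R :=
  match k with
  | 0 => q false false | 2 => p10 | 3 => q true false - p10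
  | 4 => q false true | 5 => p01 | 7 => q true true - p01
  | _ => 0
  end.

Lemma roy_weight_ge0 k : (0 <= roy_weight k)%R.
Proof. by do 8?[case: k => [|k]] => //=; rewrite subr_ge0. Qed.

Lemma roy_weight_sum1 : (\sum_(k < 8) roy_weight k = 1)%R.
Proof. by rewrite !big_ord_recr big_ord0 /= -q_sum1; lra. Qed.

Definition roy_prob : probability nat R := discrete_prob 8 roy_weight_ge0.

Let roy_probE X Z i j :
  pmf2 roy_prob X Z i j =
  (\sum_(k < 8) roy_weight k * ((X k == i) && (Z k == j))%:R)%:E.
Proof. exact: (discrete_prob_pmf2 _ roy_weight_sum1). Qed.

Lemma roy_prob_pmf2_YD i j : pmf2 roy_prob roy_Y roy_D i j = (q i j)%:E.
Proof.
rewrite roy_probE !big_ord_recr big_ord0 /=; congr EFin.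
by case: i; case: j => /=; lra.
Qed.

Lemma roy_prob_pmf2_Y0Y1 :
  [/\ pmf2 roy_prob roy_Y0 roy_Y1 false false = (q false false + q false true)%:E,
      pmf2 roy_prob roy_Y0 roy_Y1 false true = p01%:E &
      pmf2 roy_prob roy_Y0 roy_Y1 true false = p10%:E].
Proof. by rewrite !roy_probE !big_ord_recr !big_ord0 /=; split; congr EFin; lra. Qed.

Lemma roy_prob_binary_roy : binary_roy roy_prob roy_Y roy_D roy_Y0 roy_Y1.
Proof.
split.
  by move=> k; rewrite /roy_Y; case: (roy_D k); case: (roy_Y0 k); case: (roy_Y1 k).
apply: (discrete_prob_ae _ roy_weight_sum1) => k.
by do 8?[case: k => [|k]] => //=; rewrite eqxx.
Qed.

End roy_construction.

Unset Implicit Arguments.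

Theorem theorem1 (R : realType) (d : measure_display) (T : measurableType d)
  (P : probability T R) (Y D : T -> bool)
  (mY : measurable_fun setT Y) (mD : measurable_fun setT D) :
  (* (1) validity *)
  (forall Y0 Y1 : T -> bool,
     measurable_fun setT Y0 -> measurable_fun setT Y1 ->
     (binary_roy P Y D Y0 Y1 \/
      exists Y0s Y1s : T -> R,
        measurable_fun setT Y0s /\ measurable_fun setT Y1s /\
        alt_binary_roy P Y D Y0 Y1 Y0s Y1s) ->
     (0 <= pmf2 P Y0 Y1 true false /\ pmf2 P Y0 Y1 true false <= pmf2 P Y D true false) /\
     (0 <= pmf2 P Y0 Y1 false true /\ pmf2 P Y0 Y1 false true <= pmf2 P Y D true true) /\
     pmf2 P Y0 Y1 false false = pmf2 P Y D false false + pmf2 P Y D false true)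
  /\
  (* (2) sharpness *)
  (forall p00 p01 p10 : R,
     (0 <= p10%:E /\ p10%:E <= pmf2 P Y D true false) ->
     (0 <= p01%:E /\ p01%:E <= pmf2 P Y D true true) ->
     p00%:E = pmf2 P Y D false false + pmf2 P Y D false true ->
     exists (d' : measure_display) (T' : measurableType d') (P' : probability T' R)
            (Yt Dt Y0 Y1 : T' -> bool),
       [/\ measurable_fun setT Yt, measurable_fun setT Dt,
           measurable_fun setT Y0 & measurable_fun setT Y1] /\
       (forall i j : bool, pmf2 P' Yt Dt i j = pmf2 P Y D i j) /\
       binary_roy P' Yt Dt Y0 Y1 /\
       (exists Y0s Y1s : T' -> R,
          measurable_fun setT Y0s /\ measurable_fun setT Y1s /\
          (forall t, Y0s t = (Y0 t)%:R /\ Y1s t = (Y1 t)%:R) /\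
          alt_binary_roy P' Yt Dt Y0 Y1 Y0s Y1s) /\
       [/\ pmf2 P' Y0 Y1 false false = p00%:E,
           pmf2 P' Y0 Y1 false true = p01%:E &
           pmf2 P' Y0 Y1 true false = p10%:E]).
Proof.
split.
  move=> Y0 Y1 mY0 mY1 model.
  have roy : binary_roy P Y D Y0 Y1.
    by case: model => [// | [Y0s [Y1s [_ [_ /alt_binary_roy_binary_roy]]]]].
  split; [split | split; [split |]].
  - exact: measure_ge0.
  - exact: binary_roy_pmf2_10 mY mD mY0 mY1 roy.
  - exact: measure_ge0.
  - exact: binary_roy_pmf2_01 mY mD mY0 mY1 roy.
  - exact: binary_roy_pmf2_00 mY mD mY0 mY1 roy.
move=> p00 p01 p10 [p10_ge0 p10_le] [p01_ge0 p01_le] p00E.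
pose q i j := fine (pmf2 P Y D i j).
have qE i j : pmf2 P Y D i j = (q i j)%:E by rewrite fineK ?pmf2_fin_num.
have q_ge0 i j : (0 <= q i j)%R by rewrite -lee_fin -qE measure_ge0.
have q_sum1 : (q false false + q false true + q true false + q true true = 1)%R.
  by apply: EFin_inj; rewrite !EFinD -!qE pmf2_sum1.
rewrite lee_fin in p10_ge0 p01_ge0; rewrite qE lee_fin in p10_le.
rewrite qE lee_fin in p01_le; rewrite !qE -EFinD in p00E.
have roy := roy_prob_binary_roy q_ge0 q_sum1 p10_ge0 p10_le p01_ge0 p01_le.
have [pmf00 pmf01 pmf10] := roy_prob_pmf2_Y0Y1 q_ge0 q_sum1 p10_ge0 p10_le p01_ge0 p01_le.
exists _, nat, (roy_prob q_ge0 p10_ge0 p10_le p01_ge0 p01_le).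
exists roy_Y, roy_D, roy_Y0, roy_Y1.
split; first by split; exact: measurable_fun_nat.
split; first by move=> i j; rewrite roy_prob_pmf2_YD // qE.
split=> //; split; last by rewrite p00E.
exists (fun k => (roy_Y0 k)%:R), (fun k => (roy_Y1 k)%:R).
split; first exact: measurable_fun_nat.
split; first exact: measurable_fun_nat.
by split; last exact: binary_roy_alt_binary_roy.
Qed.
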